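(* Let $\theta:(0,\infty)\to\mathbb{R}$ satisfy $0<\theta(x)\le 2\arctan(x/2)$ for all $x>0$. Then for all $\Lambda\ge 0$, $m>0$ and $\Delta t>0$ satisfying $\Delta t^2\Lambda/m<4$, we have $$\left|\cos(\theta(x))-\frac{\Delta t^2(\Lambda/m)}{2}\,\frac{\sin(\theta(x))}{x}\right|<1\quad\text{for all }x>0.$$ *)

From Stdlib Require Export Reals.

(* Halve the angle: with u = theta/2 in (0, atan (x/2)], the bound tan u <= x/2 gives
   sin u <= (x/2) cos u.  Writing c = cos u and w = sin u / x, so that 0 < w <= c/2, and
   k = dt^2 Lambda / (2 m) in [0, 2), the quantity becomes 2c^2 - 1 - 2kcw.  It is below 1
   because c < 1, and above -1 because kw < 2 (c/2) = c. *)
From Stdlib Require Import Reals Lra Psatz.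
Open Scope R_scope.

Lemma abs_double_sq_sub_lt_1 (c w k : R) :
  0 < c < 1 -> 0 <= w -> 2 * w <= c -> 0 <= k < 2 ->
  Rabs (2 * c ^ 2 - 1 - 2 * k * c * w) < 1.
Proof.
  intros [Hc0 Hc1] Hw0 Hwc [Hk0 Hk2].
  assert (Hkw : k * w < c) by nra.
  apply Rabs_def1; nra.
Qed.

Lemma tan_le_of_le_atan (u y : R) : - (PI / 2) < u -> u <= atan y -> tan u <= y.
Proof.
  intros Hu Huy.
  destruct (atan_bound y) as [_ Hy].
  rewrite <- (atan_right_inv y).
  destruct Huy as [Hlt | ->]; [left; apply tan_increasing | right]; lra.
Qed.

Lemma sin_le_mul_cos_of_le_atan (u y : R) :
  - (PI / 2) < u -> u <= atan y -> sin u <= y * cos u.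
Proof.
  intros Hu Huy.
  destruct (atan_bound y) as [_ Hy].
  assert (Hcos : 0 < cos u) by (apply cos_gt_0; lra).
  assert (Htan : tan u <= y) by (apply tan_le_of_le_atan; lra).
  unfold tan in Htan.
  apply (Rmult_le_compat_r (cos u)) in Htan; [|lra].
  replace (sin u / cos u * cos u) with (sin u) in Htan by (field; lra).
  exact Htan.
Qed.

Lemma abs_cos_sub_sin_div_lt_1 (k x theta : R) :
  0 <= k < 2 -> 0 < x -> 0 < theta <= 2 * atan (x / 2) ->
  Rabs (cos theta - k * (sin theta / x)) < 1.
Proof.
  intros Hk Hx [Ht0 Ht1].
  set (u := theta / 2).
  assert (Hu0 : 0 < u) by (unfold u; lra).
  assert (Hu1 : u <= atan (x / 2)) by (unfold u; lra).
  destruct (atan_bound (x / 2)) as [_ Hatan].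
  pose proof PI_RGT_0 as Hpi.
  assert (Hc : 0 < cos u) by (apply cos_gt_0; lra).
  assert (Hs : 0 < sin u) by (apply sin_gt_0; lra).
  assert (Hsc : sin u <= x / 2 * cos u) by (apply sin_le_mul_cos_of_le_atan; lra).
  assert (Hc1 : cos u < 1) by (pose proof (sin2_cos2 u); unfold Rsqr in *; nra).
  replace theta with (2 * u) by (unfold u; field).
  rewrite sin_2a, cos_2a_cos.
  replace (2 * cos u * cos u - 1 - k * (2 * sin u * cos u / x))
    with (2 * cos u ^ 2 - 1 - 2 * k * cos u * (sin u / x)) by (field; lra).
  apply abs_double_sq_sub_lt_1; try lra.
  - left; apply Rdiv_lt_0_compat; lra.
  - apply (Rmult_le_reg_r x); [exact Hx|].
    replace (2 * (sin u / x) * x) with (2 * sin u) by (field; lra).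
    lra.
Qed.

Theorem corollary1 (theta : R -> R)
  (Htheta : forall x : R, 0 < x -> 0 < theta x /\ theta x <= 2 * atan (x / 2))
  (Lambda m dt : R)
  (HL : 0 <= Lambda) (Hm : 0 < m) (Hdt : 0 < dt)
  (Hcfl : dt ^ 2 * Lambda / m < 4) :
  forall x : R, 0 < x ->
    Rabs (cos (theta x) - (dt ^ 2 * (Lambda / m)) / 2 * (sin (theta x) / x)) < 1.
Proof.
  intros x Hx.
  apply abs_cos_sub_sin_div_lt_1; [|exact Hx|exact (Htheta x Hx)].
  assert (Hk : 0 <= dt ^ 2 * (Lambda / m)).
  { apply Rmult_le_pos; [apply pow_le; lra|].
    apply Rle_mult_inv_pos; lra. }
  unfold Rdiv in *; lra.
Qed.
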